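(* Let $T:\mathbb{R}^M\times\cdots\times\mathbb{R}^M\to\mathbb{R}^D$ ($N$ factors) be a real $N$-linear contraction with respect to the Euclidean norm, and regard $T$ as the real $D\times M^N$ matrix with entries $T_{i,s}$, so that $T^\dagger T$ is a real symmetric matrix on $(\mathbb{R}^M)^{\otimes N}$. Then the following are equivalent: 1. $T$ has a norm-preserving dilation, i.e. there is a norm-preserving $N$-linear map $\tilde T:\mathbb{R}^M\times\cdots\times\mathbb{R}^M\to\mathbb{R}^{D'}$ with $D'\ge D$ whose first $D$ output coordinates coincide with $T$; 2. there is a real symmetric matrix $Q$ on $(\mathbb{R}^M)^{\otimes N}$ of the form $Q=\sum_gc_g\bigotimes_{k=1}^NG_{g_k}$ with $c_g=0$ whenever all components of $g$ are non-negative, such that $\mathbb{1}\ge T^\dagger T+Q$; 3. $\mathrm{tr}[\rho\,T^\dagger T]\le1$ for all real density matrices $\rho$ on $(\mathbb{R}^M)^{\otimes N}$ of the form $\rho=\sum_{g\ge0}c_g\bigotimes_{k=1}^NG_{g_k}$ (sum only over $g$ with all components non-negative).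
   Context: An $N$-linear map is $T(a^{(1)},\dots,a^{(N)})_i=\sum_{s\in\{1,\dots,M\}^N}T_{i,s}\prod_ka^{(k)}_{s_k}$; it is a contraction if $\|T(a^{(1)},\dots,a^{(N)})\|\le\prod_k\|a^{(k)}\|$ for all inputs and norm-preserving if equality always holds. $\{G_\gamma\}$ is a set of $M^2$ real $M\times M$ matrices forming a basis of all real $M\times M$ matrices, orthogonal w.r.t. $(X,Y)\mapsto\mathrm{tr}[XY^T]$, with $G_0=\mathbb{1}$, $G_\gamma$ symmetric for $\gamma\ge0$ and antisymmetric for $\gamma<0$, normalized by $\mathrm{tr}[G_\gamma G_{\gamma'}^T]=2\delta_{\gamma\gamma'}$ for $\gamma,\gamma'\ne0$; $g=(g_1,\dots,g_N)$ ranges over $N$-tuples of indices and $c_g\in\mathbb{R}$. A real density matrix is a real positive semidefinite matrix of trace one; $X\le Y$ means $Y-X$ is positive semidefinite. *)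

From HB Require Import structures.
From mathcomp Require Import all_boot all_order all_algebra.
From mathcomp Require Import reals.
Set Implicit Arguments. Unset Strict Implicit. Unset Printing Implicit Defensive.
Import Order.TTheory GRing.Theory Num.Theory.
Local Open Scope ring_scope.

Section Defs.
Variable R : realType.

(* Multi-indices s in {1..M}^N, indexing the standard basis of (R^M)^{⊗N}. *)
Definition midx (N M : nat) := {ffun 'I_N -> 'I_M}.

Definition enorm (n : nat) (v : 'I_n -> R) : R := Num.sqrt (\sum_(i < n) v i ^+ 2).

Definition mlapply (N M D : nat) (T : 'I_D -> midx N M -> R)
  (a : 'I_N -> 'I_M -> R) : 'I_D -> R :=
  fun i => \sum_(s : midx N M) T i s * \prod_(k < N) a k (s k).

Definition is_contraction (N M D : nat) (T : 'I_D -> midx N M -> R) : Prop :=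
  forall a : 'I_N -> 'I_M -> R,
    enorm (mlapply T a) <= \prod_(k < N) enorm (a k).

Definition norm_preserving (N M D : nat) (T : 'I_D -> midx N M -> R) : Prop :=
  forall a : 'I_N -> 'I_M -> R,
    enorm (mlapply T a) = \prod_(k < N) enorm (a k).

Definition fmat (S : finType) := S -> S -> R.

Definition fsymm (S : finType) (A : fmat S) : Prop := forall s t, A s t = A t s.

Definition fpsd (S : finType) (A : fmat S) : Prop :=
  fsymm A /\ forall x : S -> R, 0 <= \sum_(s : S) \sum_(t : S) x s * A s t * x t.

Definition ftrace (S : finType) (A : fmat S) : R := \sum_(s : S) A s s.

Definition fmul (S : finType) (A B : fmat S) : fmat S :=
  fun s t => \sum_(u : S) A s u * B u t.

Definition fid (S : finType) : fmat S := fun s t => if s == t then 1 else 0.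

Definition floe (S : finType) (A B : fmat S) : Prop := fpsd (fun s t => B s t - A s t).

Definition density (S : finType) (rho : fmat S) : Prop := fpsd rho /\ ftrace rho = 1.

Definition TdagT (N M D : nat) (T : 'I_D -> midx N M -> R) : fmat (midx N M) :=
  fun s t => \sum_(i < D) T i s * T i t.

(* Hypotheses on the family {G_gamma}: indices in a finite type Gam, with a
   distinguished index g0 (gamma = 0) and a predicate nonneg (gamma >= 0). *)
Definition Gbasis (M : nat) (Gam : finType) (nonneg : pred Gam) (g0 : Gam)
  (G : Gam -> 'M[R]_M) : Prop :=
  #|Gam| = (M * M)%N /\
      (forall X : 'M[R]_M, exists c : Gam -> R, X = \sum_(g : Gam) c g *: G g) /\
      (forall g g', g != g' -> \tr (G g *m (G g')^T) = 0) /\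
      (forall g, g != g0 -> \tr (G g *m (G g)^T) = 2) /\
      nonneg g0 /\ G g0 = 1%:M /\
      (forall g, nonneg g -> (G g)^T = G g) /\
      (forall g, ~~ nonneg g -> (G g)^T = - G g).

Definition Gtensor (N M : nat) (Gam : finType) (G : Gam -> 'M[R]_M)
  (g : {ffun 'I_N -> Gam}) : fmat (midx N M) :=
  fun s t => \prod_(k < N) G (g k) (s k) (t k).

Definition Gexpand (N M : nat) (Gam : finType) (G : Gam -> 'M[R]_M)
  (c : {ffun 'I_N -> Gam} -> R) : fmat (midx N M) :=
  fun s t => \sum_(g : {ffun 'I_N -> Gam}) c g * Gtensor G g s t.

End Defs.

From HB Require Import structures.
From mathcomp Require Import all_boot all_order all_algebra.
From mathcomp Require Import reals ring lra.
From mathcomp Require Import boolp.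
From mathcomp Require classical_sets topology normedtype derive.
Import Order.TTheory GRing.Theory Num.Theory.
Local Open Scope ring_scope.
Set Implicit Arguments. Unset Strict Implicit. Unset Printing Implicit Defensive.

(* (1) => (3): for a norm-preserving dilation Tt, the matrix Tt^† Tt - 1 vanishes on
   product vectors, hence is orthogonal to every product of symmetric G's (these are
   combinations of outer products of product vectors); so for rho in their span,
   tr[rho T^† T] <= tr[rho Tt^† Tt] = tr rho = 1.
   (3) => (2): by a Farkas lemma for the cone of positive semidefinite matrices, (3)
   yields P >= 0 with the same coordinates as 1 - T^† T along the symmetric products;
   Q := 1 - T^† T - P then has only non-symmetric coordinates.
   (2) => (1): factor 1 - T^† T - Q as a sum of squares and append the factors as new
   rows of T; Q is invisible on product vectors since each non-symmetric product has
   an antisymmetric factor. *)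

Section FiniteMatrices.
Variable R : realType.
Variable S : finType.
Implicit Types (X Y Z : fmat R S) (x : S -> R).

Definition quadf X x : R := \sum_s \sum_t x s * X s t * x t.
Definition fdot X Y : R := \sum_s \sum_t X s t * Y s t.
Definition fdelta (s : S) : S -> R := fun u => (u == s)%:R.

Lemma sum_fdeltar (F : S -> R) s : \sum_u F u * fdelta s u = F s.
Proof.
rewrite (bigD1 s) //= /fdelta eqxx mulr1 big1 ?addr0 // => u /negbTE ->.
by rewrite mulr0.
Qed.

Lemma sum_fdeltal (F : S -> R) s : \sum_u fdelta s u * F u = F s.
Proof. by rewrite -[RHS](sum_fdeltar F s); apply: eq_bigr => u _; rewrite mulrC. Qed.

Lemma quadf_fdelta X s : quadf X (fdelta s) = X s s.
Proof.
rewrite /quadf -[RHS](sum_fdeltal (fun u => X u s)); apply: eq_bigr => u _.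
by rewrite -[RHS](sum_fdeltar (fun t => fdelta s u * X u t)).
Qed.

Lemma fdotC X Y : fdot X Y = fdot Y X.
Proof. by apply: eq_bigr => s _; apply: eq_bigr => t _; rewrite mulrC. Qed.

Lemma fdotDr X Y Z : fdot X (fun s t => Y s t + Z s t) = fdot X Y + fdot X Z.
Proof.
rewrite /fdot -big_split; apply: eq_bigr => s _.
by rewrite -big_split; apply: eq_bigr => t _; rewrite mulrDr.
Qed.

Lemma fdotBr X Y Z : fdot X (fun s t => Y s t - Z s t) = fdot X Y - fdot X Z.
Proof.
rewrite /fdot -sumrB; apply: eq_bigr => s _.
by rewrite -sumrB; apply: eq_bigr => t _; rewrite mulrBr.
Qed.

Lemma fdotZr X a Y : fdot X (fun s t => a * Y s t) = a * fdot X Y.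
Proof.
rewrite /fdot mulr_sumr; apply: eq_bigr => s _.
by rewrite mulr_sumr; apply: eq_bigr => t _; rewrite mulrCA.
Qed.

Lemma fdot_suml (I : finType) (c : I -> R) (Z : I -> fmat R S) Y :
  fdot (fun s t => \sum_i c i * Z i s t) Y = \sum_i c i * fdot (Z i) Y.
Proof.
rewrite /fdot.
under eq_bigr => s _ do under eq_bigr => t _ do rewrite mulr_suml.
under eq_bigr => s _ do rewrite exchange_big /=.
rewrite exchange_big /=; apply: eq_bigr => i _.
rewrite mulr_sumr; apply: eq_bigr => s _; rewrite mulr_sumr.
by apply: eq_bigr => t _; rewrite mulrA.
Qed.

Lemma quadfE X x : quadf X x = fdot (fun s t => x s * x t) X.
Proof. by apply: eq_bigr => s _; apply: eq_bigr => t _; rewrite mulrAC. Qed.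

Lemma fdot_fid X : fdot X (@fid R S) = ftrace X.
Proof.
apply: eq_bigr => s _; rewrite (bigD1 s) //= /fid eqxx mulr1 big1 ?addr0 //.
by move=> t /negbTE; rewrite eq_sym => ->; rewrite mulr0.
Qed.

Lemma ftraceE X : ftrace X = fdot (@fid R S) X.
Proof. by rewrite fdotC fdot_fid. Qed.

Lemma ftrace_fmul X Y : fsymm Y -> ftrace (fmul X Y) = fdot X Y.
Proof. by move=> sY; apply: eq_bigr => s _; apply: eq_bigr => u _; rewrite sY. Qed.

Lemma quadf_fid x : quadf (@fid R S) x = \sum_s x s ^+ 2.
Proof.
apply: eq_bigr => s _; rewrite (bigD1 s) //= /fid eqxx big1 ?addr0 ?mulr1 ?expr2 //.
by move=> t /negbTE; rewrite eq_sym => ->; rewrite mulr0 mul0r.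
Qed.

Lemma quadf_outer v x :
  quadf (fun s t => v s * v t) x = (\sum_s v s * x s) ^+ 2.
Proof.
rewrite expr2 mulr_suml; apply: eq_bigr => s _; rewrite mulr_sumr.
by apply: eq_bigr => t _; ring.
Qed.

Lemma quadf_sum_outer (l : seq (S -> R)) x :
  quadf (fun s t => \sum_(v <- l) v s * v t) x = \sum_(v <- l) (\sum_s v s * x s) ^+ 2.
Proof.
rewrite /quadf.
under eq_bigr => a _ do under eq_bigr => b _ do rewrite mulr_sumr mulr_suml.
under eq_bigr => a _ do rewrite exchange_big /=.
rewrite exchange_big /=; apply: eq_bigr => v _.
rewrite expr2 mulr_suml; apply: eq_bigr => a _; rewrite mulr_sumr.
by apply: eq_bigr => b _; ring.
Qed.

Lemma fdot_decomp (I : finType) (c : I -> R) (v : I -> S -> R) X Y :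
  (forall s t, X s t = \sum_i c i * v i s * v i t) ->
  fdot X Y = \sum_i c i * quadf Y (v i).
Proof.
move=> HX; rewrite /fdot.
under eq_bigr => s _ do under eq_bigr => t _ do rewrite HX mulr_suml.
under eq_bigr => s _ do rewrite exchange_big /=.
rewrite exchange_big /=; apply: eq_bigr => i _.
rewrite /quadf mulr_sumr; apply: eq_bigr => s _; rewrite mulr_sumr.
by apply: eq_bigr => t _; ring.
Qed.

End FiniteMatrices.
Arguments fdelta {R S} s _.

Section PositiveSemidefinite.
Variable R : realType.
Variable S : finType.
Implicit Types (P Q : fmat R S) (x : S -> R).

Lemma fpsd_diag_ge0 P s : fpsd P -> 0 <= P s s.
Proof. by case=> _ /(_ (fdelta s)); rewrite -/(quadf P (fdelta s)) quadf_fdelta. Qed.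

Lemma quadf_add_fdelta P x s l : fsymm P ->
  quadf P (fun u => x u + l * fdelta s u) =
  quadf P x + 2 * l * (\sum_t P s t * x t) + l ^+ 2 * P s s.
Proof.
move=> sP.
have E1 : \sum_a \sum_b x a * P a b * (l * fdelta s b) = l * \sum_t P s t * x t.
  rewrite mulr_sumr; apply: eq_bigr => a _.
  transitivity (x a * P a s * l); last by rewrite sP; ring.
  rewrite -(sum_fdeltar (fun b => x a * P a b * l)) /=.
  by apply: eq_bigr => b _; ring.
have E2 : \sum_a \sum_b l * fdelta s a * P a b * x b = l * \sum_t P s t * x t.
  rewrite -[RHS](sum_fdeltal (fun a => l * \sum_b P a b * x b)) /=.
  by apply: eq_bigr => a _; rewrite !mulr_sumr; apply: eq_bigr => b _; ring.
have E3 : \sum_a \sum_b l * fdelta s a * P a b * (l * fdelta s b) = l ^+ 2 * P s s.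
  rewrite -[RHS](sum_fdeltal (fun a => l ^+ 2 * P a s)) /=.
  apply: eq_bigr => a _.
  rewrite -[RHS](sum_fdeltar (fun b => fdelta s a * (l ^+ 2 * P a b))) /=.
  by apply: eq_bigr => b _; ring.
rewrite /quadf; transitivity (\sum_a \sum_b x a * P a b * x b
  + \sum_a \sum_b x a * P a b * (l * fdelta s b)
  + \sum_a \sum_b l * fdelta s a * P a b * x b
  + \sum_a \sum_b l * fdelta s a * P a b * (l * fdelta s b)).
  rewrite -!big_split; apply: eq_bigr => a _.
  by rewrite -!big_split; apply: eq_bigr => b _ /=; ring.
rewrite E1 E2 E3; ring.
Qed.

Lemma fpsd_diag0_row0 P s t : fpsd P -> P s s = 0 -> P s t = 0.
Proof.
move=> [sP qP] Pss; apply/eqP; apply/negP => /negP nz.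
have := qP (fun u => fdelta t u + (- (P t t + 1) / (2 * P s t)) * fdelta s u).
rewrite -/(quadf P _) quadf_add_fdelta // Pss mulr0 addr0 sum_fdeltar quadf_fdelta.
have -> : 2 * (- (P t t + 1) / (2 * P s t)) * P s t = - (P t t + 1) by field.
lra.
Qed.

Lemma fpsd_row_sqr_le P s x : fpsd P -> 0 < P s s ->
  (\sum_t P s t * x t) ^+ 2 / P s s <= quadf P x.
Proof.
move=> [sP qP] Pss.
have := qP (fun u => x u + (- (\sum_t P s t * x t) / P s s) * fdelta s u).
rewrite -/(quadf P _) quadf_add_fdelta //.
set b := \sum_t _.
have -> : quadf P x + 2 * (- b / P s s) * b + (- b / P s s) ^+ 2 * P s s
   = quadf P x - b ^+ 2 / P s s by field; rewrite gt_eqF.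
by rewrite subr_ge0.
Qed.

Lemma fpsd_entry_le_ftrace P s t : fpsd P -> `|P s t| <= ftrace P.
Proof.
move=> hP; have [sP qP] := hP.
have key l : l ^+ 2 = 1 -> 0 <= P t t + 2 * l * P s t + P s s.
  move=> l2; have := qP (fun u => fdelta t u + l * fdelta s u).
  by rewrite -/(quadf P _) quadf_add_fdelta // quadf_fdelta sum_fdeltar l2 mul1r sP.
have h1 := key 1 (expr1n _ _).
have h2 : 0 <= P t t + 2 * (-1) * P s t + P s s by apply: key; rewrite sqrrN expr1n.
have diag_le u : P u u <= ftrace P.
  rewrite /ftrace (bigD1 u) //= lerDl.
  by apply: sumr_ge0 => v _; exact: fpsd_diag_ge0.
have := diag_le s; have := diag_le t.
rewrite ler_norml => *; apply/andP; split; lra.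
Qed.

Lemma ftrace_fpsd_ge0 P : fpsd P -> 0 <= ftrace P.
Proof. by move=> hP; apply: sumr_ge0 => s _; exact: fpsd_diag_ge0. Qed.

Lemma fpsd_ftrace_eq0 P : fpsd P -> ftrace P = 0 -> forall s t, P s t = 0.
Proof.
move=> hP t0 s t; apply: fpsd_diag0_row0 => //.
by apply: (psumr_eq0P (P := predT) (F := fun s => P s s)) => // u _; exact: fpsd_diag_ge0.
Qed.

Lemma fpsd_outer x : fpsd (fun s t => x s * x t).
Proof.
split => [s t|y]; first by rewrite mulrC.
by rewrite -/(quadf _ y) quadf_outer sqr_ge0.
Qed.

Lemma fpsd_comb a c P Q : 0 <= a -> 0 <= c -> fpsd P -> fpsd Q ->
  fpsd (fun s t => a * P s t + c * Q s t).
Proof.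
move=> a0 c0 [sP qP] [sQ qQ]; split => [s t|x]; first by rewrite sP sQ.
rewrite -/(quadf _ x) quadfE fdotDr !fdotZr -!quadfE.
by apply: addr_ge0; apply: mulr_ge0 => //; [exact: qP | exact: qQ].
Qed.

Lemma fpsd_scale a P : 0 <= a -> fpsd P -> fpsd (fun s t => a * P s t).
Proof.
move=> a0 [sP qP]; split => [s t|x]; first by rewrite sP.
by rewrite -/(quadf _ x) quadfE fdotZr -quadfE mulr_ge0 //; exact: qP.
Qed.

(* Cholesky: split off the rank-one part (P s) (P s)^T / P s s and induct on the support. *)
Lemma fpsd_sum_outer P : fpsd P ->
  exists l : seq (S -> R), forall s t, P s t = \sum_(v <- l) v s * v t.
Proof.
suff H n (F : {set S}) P' : (#|F| <= n)%N -> fpsd P' ->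
    (forall s t, s \notin F -> P' s t = 0) ->
    exists l : seq (S -> R), forall s t, P' s t = \sum_(v <- l) v s * v t.
  by move=> hP; apply: (H #|[set: S]| [set: S]) => // s t; rewrite finset.in_setT.
elim: n F P' => [|n IH] F {}P.
  rewrite leqn0 finset.cards_eq0 => /eqP -> _ HP; exists [::] => s t.
  by rewrite big_nil HP // finset.in_set0.
move=> cF hP HP.
have [F0|[s sF]] := finset.set_0Vmem F.
  by exists [::] => u t; rewrite big_nil HP // F0 finset.in_set0.
have cF' : (#|F :\ s| <= n)%N by move: cF; rewrite (finset.cardsD1 s F) sF add1n ltnS.
have outside_Fs P' : (forall u t, u \notin F -> P' u t = 0) -> (forall t, P' s t = 0) ->
    forall u t, u \notin F :\ s -> P' u t = 0.
  move=> HP' Ps u t; rewrite finset.in_setD1 negb_and negbK.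
  by case/orP => [/eqP -> |]; [exact: Ps | exact: HP'].
have [sP qP] := hP.
have [Pss0|Pssn] := eqVneq (P s s) 0.
  by apply: (IH (F :\ s)) => //; apply: outside_Fs => // t; exact: fpsd_diag0_row0.
have Pss : 0 < P s s by rewrite lt_def Pssn fpsd_diag_ge0.
have sq : Num.sqrt (P s s) ^+ 2 = P s s by rewrite sqr_sqrtr // ltW.
pose v t := P s t / Num.sqrt (P s s).
pose P' t u := P t u - v t * v u.
have hP' : fpsd P'.
  split => [t u|x]; first by rewrite /P' sP mulrC.
  rewrite -/(quadf P' x).
  have -> : quadf P' x = quadf P x - (\sum_t P s t * x t) ^+ 2 / P s s.
    have -> : (\sum_t P s t * x t) ^+ 2 / P s s = (\sum_t v t * x t) ^+ 2.
      rewrite -sq -expr_div_n mulr_suml; congr (_ ^+ 2).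
      by apply: eq_bigr => t _; rewrite mulrAC.
    by rewrite quadfE fdotBr -!quadfE quadf_outer.
  by rewrite subr_ge0 fpsd_row_sqr_le.
have [l Hl] : exists l : seq (S -> R), forall a b, P' a b = \sum_(w <- l) w a * w b.
  apply: (IH (F :\ s)) => //; apply: outside_Fs => [u t uF|t].
    by rewrite /P' /v HP // sP HP // !mul0r subrr.
  by rewrite /P' /v mulrACA -invfM -expr2 sq mulrAC mulfV ?mul1r ?subrr ?gt_eqF.
exists (v :: l) => a b; rewrite big_cons -Hl /P'; ring.
Qed.

End PositiveSemidefinite.

Lemma natr_andb (R : pzSemiRingType) (b1 b2 : bool) : ((b1 && b2)%:R : R) = b1%:R * b2%:R.
Proof. by rewrite -natrM mulnb. Qed.

Section ProductVectors.
Variable R : realType.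
Variables N M : nat.
Local Notation S := (midx N M).
Implicit Types (a : 'I_N -> 'I_M -> R) (s t : S).

Definition tensorv a : S -> R := fun s => \prod_k a k (s k).

Lemma sum_prod (F : 'I_N -> 'I_M -> R) :
  \sum_(s : S) \prod_k F k (s k) = \prod_k \sum_j F k j.
Proof. by rewrite bigA_distr_bigA. Qed.

Lemma sum2_prod (F : 'I_N -> 'I_M -> 'I_M -> R) :
  \sum_(s : S) \sum_(t : S) \prod_k F k (s k) (t k) = \prod_k \sum_i \sum_j F k i j.
Proof.
rewrite -sum_prod; apply: eq_bigr => s _; exact: sum_prod.
Qed.

Lemma prod_eq_natr s t : \prod_k ((s k == t k)%:R : R) = (s == t)%:R.
Proof.
have [->|/eqP nst] := eqVneq s t; first by rewrite big1 // => k _; rewrite eqxx.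
have [k /negbTE Hk] : exists k, s k != t k.
  by apply/existsP; apply: contra_notT nst => /existsPn H; apply/ffunP => k; apply/eqP/negPn.
by rewrite (bigD1 k) //= Hk mul0r.
Qed.

Lemma quadf_Gtensor (Gam : finType) (G : Gam -> 'M[R]_M) (g : {ffun 'I_N -> Gam}) a :
  quadf (Gtensor G g) (tensorv a) =
  \prod_k \sum_i \sum_j a k i * G (g k) i j * a k j.
Proof.
rewrite -sum2_prod /quadf; apply: eq_bigr => s _; apply: eq_bigr => t _.
by rewrite /tensorv /Gtensor -!big_split.
Qed.

Lemma sumsq_mlapply D (T : 'I_D -> S -> R) a :
  \sum_i mlapply T a i ^+ 2 = quadf (TdagT T) (tensorv a).
Proof.
rewrite /quadf /TdagT /mlapply.
under eq_bigr => i _ do rewrite expr2 mulr_suml.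
rewrite exchange_big /=; apply: eq_bigr => s _.
under eq_bigr => i _ do rewrite mulr_sumr.
rewrite exchange_big /=; apply: eq_bigr => t _.
rewrite mulr_sumr mulr_suml; apply: eq_bigr => i _ /=; rewrite /tensorv; ring.
Qed.

Lemma mlapply_delta D (T : 'I_D -> S -> R) i s :
  mlapply T (fun k p => (p == s k)%:R) i = T i s.
Proof.
rewrite /mlapply -[RHS](sum_fdeltar (T i) s); apply: eq_bigr => t _.
by rewrite /fdelta -prod_eq_natr.
Qed.

Lemma prod_sumsq a :
  \prod_k (\sum_j a k j ^+ 2) = quadf (@fid R S) (tensorv a).
Proof.
rewrite quadf_fid -sum_prod; apply: eq_bigr => s _.
by rewrite /tensorv prodrXl.
Qed.

Lemma prod_sqrt (I : finType) (F : I -> R) : (forall k, 0 <= F k) ->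
  \prod_k Num.sqrt (F k) = Num.sqrt (\prod_k F k).
Proof.
move=> F0; elim/big_rec2: _ => [|k x y _ ->]; first by rewrite sqrtr1.
by rewrite sqrtrM.
Qed.

Lemma norm_preservingP D (T : 'I_D -> S -> R) :
  norm_preserving T <->
  forall a, quadf (TdagT T) (tensorv a) = quadf (@fid R S) (tensorv a).
Proof.
have normE a : \prod_k enorm (a k) = Num.sqrt (quadf (@fid R S) (tensorv a)).
  by rewrite /enorm prod_sqrt ?prod_sumsq // => k; apply: sumr_ge0 => j _; exact: sqr_ge0.
have fid_ge0 a : 0 <= quadf (@fid R S) (tensorv a).
  by rewrite quadf_fid; apply: sumr_ge0 => s _; exact: sqr_ge0.
have TdagT_ge0 a : 0 <= quadf (TdagT T) (tensorv a).
  by rewrite -sumsq_mlapply; apply: sumr_ge0 => j _; exact: sqr_ge0.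
split => H a.
  by have /eqP := H a; rewrite normE /enorm sumsq_mlapply eqr_sqrt // => /eqP.
by rewrite normE /enorm sumsq_mlapply H.
Qed.

End ProductVectors.

Section TensorBasis.
Variable R : realType.
Variables N M : nat.
Local Notation S := (midx N M).
Variable Gam : finType.
Variable nonneg : pred Gam.
Variable g0 : Gam.
Variable G : Gam -> 'M[R]_M.
Hypothesis HG : Gbasis nonneg g0 G.
Implicit Types (g : {ffun 'I_N -> Gam}) (c : Gam).

Lemma Gbasis_card : #|Gam| = (M * M)%N.
Proof. by case: HG. Qed.

Lemma Gbasis_span (X : 'M[R]_M) : exists a : Gam -> R, X = \sum_c a c *: G c.
Proof. by case: HG => _ [span _]; exact: span. Qed.

Lemma Gbasis_orth c c' : c != c' -> \tr (G c *m (G c')^T) = 0.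
Proof. by case: HG => _ [_ [orth _]]; exact: orth. Qed.

Lemma Gbasis_norm c : c != g0 -> \tr (G c *m (G c)^T) = 2.
Proof. by case: HG => _ [_ [_ [nrm _]]]; exact: nrm. Qed.

Lemma Gbasis_nonneg0 : nonneg g0.
Proof. by case: HG => _ [_ [_ [_ []]]]. Qed.

Lemma Gbasis0 : G g0 = 1%:M.
Proof. by case: HG => _ [_ [_ [_ [_ []]]]]. Qed.

Lemma Gbasis_sym c : nonneg c -> (G c)^T = G c.
Proof. by case: HG => _ [_ [_ [_ [_ [_ [sym _]]]]]]; exact: sym. Qed.

Lemma Gbasis_antisym c : ~~ nonneg c -> (G c)^T = - G c.
Proof. by case: HG => _ [_ [_ [_ [_ [_ [_ asym]]]]]]; exact: asym. Qed.

Definition Gnorm c : R := \tr (G c *m (G c)^T).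
Definition Gtnorm g : R := \prod_k Gnorm (g k).

Lemma mxtrace_mul_tr (A B : 'M[R]_M) : \tr (A *m B^T) = \sum_i \sum_j A i j * B i j.
Proof.
rewrite /mxtrace; apply: eq_bigr => i _; rewrite mxE; apply: eq_bigr => j _.
by rewrite mxE.
Qed.

Lemma Gnorm_neq0 c : Gnorm c != 0.
Proof.
have [->|ne] := eqVneq c g0; last by rewrite /Gnorm Gbasis_norm // pnatr_eq0.
have M_gt0 : (0 < M)%N.
  have : (0 < #|Gam|)%N by apply/card_gt0P; exists g0.
  by rewrite Gbasis_card muln_gt0 andbb.
by rewrite /Gnorm Gbasis0 trmx1 mulmx1 mxtrace1 pnatr_eq0 -lt0n.
Qed.

(* Coordinates of the matrix unit E_{p'q'} in the orthogonal basis G. *)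
Lemma Gbasis_delta (p q p' q' : 'I_M) :
  ((p == p') && (q == q'))%:R = \sum_c (G c p' q' / Gnorm c) * G c p q.
Proof.
have [a Ha] := Gbasis_span (delta_mx p' q').
have coord c : a c = G c p' q' / Gnorm c.
  have -> : G c p' q' = \tr (delta_mx p' q' *m (G c)^T).
    rewrite mxtrace_mul_tr -(sum_fdeltal (fun i => G c i q') p'); apply: eq_bigr => i _.
    rewrite -(sum_fdeltar (fun j => fdelta p' i * G c i j) q'); apply: eq_bigr => j _.
    by rewrite mxE natr_andb /fdelta; ring.
  rewrite Ha mulmx_suml raddf_sum (bigD1 c) //= big1 ?addr0.
    by rewrite -scalemxAl mxtraceZ mulfK // Gnorm_neq0.
  by move=> c' nc; rewrite -scalemxAl mxtraceZ Gbasis_orth ?mulr0.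
have := congr1 (fun A : 'M[R]_M => A p q) Ha; rewrite /= mxE summxE => ->.
by apply: eq_bigr => c _; rewrite mxE coord.
Qed.

Lemma Gtensor_delta (s s' t t' : S) :
  \sum_g (Gtensor G g s' t' / Gtnorm g) * Gtensor G g s t = ((s == s') && (t == t'))%:R.
Proof.
have -> : ((s == s') && (t == t'))%:R = \prod_k ((s k == s' k) && (t k == t' k))%:R :> R.
  rewrite natr_andb -!prod_eq_natr -big_split /=.
  by apply: eq_bigr => k _; rewrite natr_andb.
under eq_bigr => k _ do rewrite Gbasis_delta.
rewrite bigA_distr_bigA /=; apply: eq_bigr => g _.
by rewrite /Gtensor /Gtnorm -prodf_div -big_split.
Qed.

Lemma Gtensor_expansion (X : fmat R S) s t :
  X s t = \sum_g (fdot (Gtensor G g) X / Gtnorm g) * Gtensor G g s t.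
Proof.
transitivity (\sum_(s' : S) \sum_(t' : S) X s' t' *
    \sum_g (Gtensor G g s' t' / Gtnorm g) * Gtensor G g s t).
  under eq_bigr => s' _ do under eq_bigr => t' _ do rewrite Gtensor_delta natr_andb.
  rewrite -[LHS](sum_fdeltar (fun s' => X s' t) s) /=; apply: eq_bigr => s' _.
  rewrite -(sum_fdeltar (fun t' => X s' t' * fdelta s s') t) /=; apply: eq_bigr => t' _.
  by rewrite /fdelta [s == s']eq_sym [t == t']eq_sym mulrA.
rewrite /fdot.
under eq_bigr => s' _ do under eq_bigr => t' _ do rewrite mulr_sumr.
under eq_bigr => s' _ do rewrite exchange_big /=.
rewrite exchange_big /=; apply: eq_bigr => g _.
rewrite mulr_suml mulr_suml; apply: eq_bigr => s' _.
by rewrite mulr_suml mulr_suml; apply: eq_bigr => t' _; ring.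
Qed.

End TensorBasis.

Section SymmetricProducts.
Variable R : realType.
Variables N M : nat.
Local Notation S := (midx N M).
Variable Gam : finType.
Variable G : Gam -> 'M[R]_M.
Implicit Types (g : {ffun 'I_N -> Gam}).

Definition signb (b : bool) : R := if b then 1 else -1.
Definition polvec (i j : 'I_M) (b : bool) (p : 'I_M) : R :=
  (i == p)%:R + signb b * (j == p)%:R.

(* Polarisation: e_i e_j^T + e_j e_i^T = ((e_i + e_j)(e_i + e_j)^T - (e_i - e_j)(e_i - e_j)^T) / 2. *)
Lemma symmx_polarization (Z : 'M[R]_M) : Z^T = Z -> forall p q,
  Z p q = \sum_i \sum_j \sum_b Z i j / 4 * signb b * polvec i j b p * polvec i j b q.
Proof.
move=> eZ p q.
have sZ : Z q p = Z p q by rewrite -[in LHS]eZ mxE.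
transitivity (\sum_i \sum_j (Z i j / 2 * fdelta p i * fdelta q j
                            + Z i j / 2 * fdelta q i * fdelta p j)); last first.
  apply: eq_bigr => i _; apply: eq_bigr => j _.
  by rewrite big_bool /polvec /signb /fdelta /=; field.
under eq_bigr => i _ do rewrite big_split /= (sum_fdeltar (fun j => Z i j / 2 * fdelta p i))
  (sum_fdeltar (fun j => Z i j / 2 * fdelta q i)).
rewrite big_split /= (sum_fdeltar (fun i => Z i q / 2)) (sum_fdeltar (fun i => Z i p / 2)) sZ.
by field.
Qed.

Lemma Gtensor_sym_outer g : (forall k, (G (g k))^T = G (g k)) ->
  exists (I : finType) (w : I -> R) (v : I -> 'I_N -> 'I_M -> R),
    forall s t, Gtensor G g s t = \sum_i w i * tensorv (v i) s * tensorv (v i) t.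
Proof.
move=> sG.
pose F k i j b (p q : 'I_M) :=
  G (g k) i j / 4 * signb b * polvec i j b p * polvec i j b q.
pose I := ({ffun 'I_N -> 'I_M} * {ffun 'I_N -> 'I_M} * {ffun 'I_N -> bool})%type.
pose w (z : I) := \prod_k (G (g k) (z.1.1 k) (z.1.2 k) / 4 * signb (z.2 k)).
pose v (z : I) k := polvec (z.1.1 k) (z.1.2 k) (z.2 k).
exists I, w, v => s t.
rewrite /Gtensor; under eq_bigr => k _ do rewrite (symmx_polarization (sG k) (s k) (t k)).
rewrite (bigA_distr_bigA (fun k i => \sum_j \sum_b F k i j b (s k) (t k))).
transitivity (\sum_(fi : {ffun 'I_N -> 'I_M}) \sum_(fj : {ffun 'I_N -> 'I_M})
   \sum_(fb : {ffun 'I_N -> bool})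
   w (fi, fj, fb) * tensorv (v (fi, fj, fb)) s * tensorv (v (fi, fj, fb)) t); last first.
  rewrite (pair_bigA _ (fun fi fj => \sum_(fb : {ffun 'I_N -> bool}) _)) /=.
  by rewrite (pair_bigA _ (fun z fb => w (z, fb) * _ * _)) /=.
apply: eq_bigr => fi _.
rewrite (bigA_distr_bigA (fun k j => \sum_b F k (fi k) j b (s k) (t k))).
apply: eq_bigr => fj _.
rewrite (bigA_distr_bigA (fun k b => F k (fi k) (fj k) b (s k) (t k))).
by apply: eq_bigr => fb _; rewrite /tensorv /F /= -!big_split.
Qed.

Lemma fdot_Gtensor_eq0 (Y : fmat R S) g :
  (forall a, quadf Y (tensorv a) = 0) -> (forall k, (G (g k))^T = G (g k)) ->
  fdot (Gtensor G g) Y = 0.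
Proof.
move=> HY /Gtensor_sym_outer [I [w [v Hg]]].
by rewrite (fdot_decomp Y Hg) big1 // => i _; rewrite HY mulr0.
Qed.

Lemma quadf_antisym_eq0 (Z : 'M[R]_M) (x : 'I_M -> R) : Z^T = - Z ->
  \sum_i \sum_j x i * Z i j * x j = 0.
Proof.
move=> eZ; set q := (X in X = 0).
suff : q = - q by move=> h; lra.
rewrite {1}/q exchange_big /= -sumrN; apply: eq_bigr => i _.
rewrite -sumrN; apply: eq_bigr => j _.
have -> : Z j i = - Z i j by have := congr1 (fun A : 'M[R]_M => A i j) eZ; rewrite !mxE.
ring.
Qed.

End SymmetricProducts.

Section Gexpand.
Variable R : realType.
Variables N M : nat.
Local Notation S := (midx N M).
Variable Gam : finType.
Variable nonneg : pred Gam.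
Variable g0 : Gam.
Variable G : Gam -> 'M[R]_M.
Hypothesis HG : Gbasis nonneg g0 G.
Implicit Types (g : {ffun 'I_N -> Gam}) (c : {ffun 'I_N -> Gam} -> R) (X : fmat R S).

Definition all_nonneg g := [forall k, nonneg (g k)].

Lemma Gtensor_sym g : all_nonneg g -> fsymm (Gtensor G g).
Proof.
move=> /forallP Hg s t; apply: eq_bigr => k _.
by rewrite -[in LHS](Gbasis_sym HG (Hg k)) mxE.
Qed.

Lemma Gexpand_sym c : (forall g, ~~ all_nonneg g -> c g = 0) -> fsymm (Gexpand G c).
Proof.
move=> Hc s t; apply: eq_bigr => g _.
by have [/Gtensor_sym -> //|/Hc ->] := boolP (all_nonneg g); rewrite !mul0r.
Qed.

(* Each non-symmetric product has an antisymmetric factor, whose quadratic form vanishes. *)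
Lemma quadf_Gexpand_tensorv c a :
  (forall g, all_nonneg g -> c g = 0) -> quadf (Gexpand G c) (tensorv a) = 0.
Proof.
move=> Hc; rewrite quadfE fdotC fdot_suml; apply: big1 => g _.
have [/Hc ->|/forallPn [k Hk]] := boolP (all_nonneg g); first by rewrite mul0r.
rewrite fdotC -quadfE quadf_Gtensor (bigD1 k) //=.
by rewrite quadf_antisym_eq0 ?mul0r ?mulr0 //; exact: Gbasis_antisym HG _ Hk.
Qed.

Lemma Gexpand_nonsym X : (forall g, all_nonneg g -> fdot (Gtensor G g) X = 0) ->
  X = Gexpand G (fun g => if all_nonneg g then 0 else fdot (Gtensor G g) X / Gtnorm G g).
Proof.
move=> HX; apply/funext => s; apply/funext => t.
rewrite [LHS](Gtensor_expansion HG X s t); apply: eq_bigr => g _.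
by case: ifP => // /HX ->; rewrite !mul0r.
Qed.

Lemma Gtensor_g0 : Gtensor G [ffun => g0] = @fid R S.
Proof.
apply/funext => s; apply/funext => t; rewrite /Gtensor /fid.
under eq_bigr => k _ do rewrite ffunE (Gbasis0 HG) mxE.
by rewrite prod_eq_natr; case: (s == t).
Qed.

End Gexpand.

Section CompactSlice.
Import classical_sets topology normedtype derive numFieldNormedType.Exports.
Local Open Scope classical_set_scope.
Variable R : realType.
Variable S : finType.
Local Notation n := #|{: S * S}|.
Local Notation V := 'rV[R]_n.

(* Coordinates identifying matrices on S with row vectors, to borrow the topology of 'rV. *)
Definition vec (v : V) : fmat R S := fun s t => v ord0 (enum_rank (s, t)).
Definition unvec (P : fmat R S) : V := \row_k P (enum_val k).1 (enum_val k).2.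

Lemma unvecK P : vec (unvec P) = P.
Proof. by apply/funext => s; apply/funext => t; rewrite /vec mxE enum_rankK. Qed.

Lemma continuous_fdot_vec (X : fmat R S) : continuous (fun v => fdot X (vec v)).
Proof.
apply: continuous_big => [|s _]; first exact: add_continuous.
apply: continuous_big => [|t _]; first exact: add_continuous.
move=> v; apply: continuousM; first exact: cst_continuous.
exact: coord_continuous.
Qed.

Lemma closed_preimage (F : V -> R) (D : set R) :
  closed D -> continuous F -> closed (F @^-1` D).
Proof. by move=> cD cF; apply: preimage_closed => // v _; exact: cF. Qed.

Definition fpsd_slice (T0 : R) := [set v : V | fpsd (vec v) /\ ftrace (vec v) <= T0].

Lemma closed_fpsd_slice T0 : closed (fpsd_slice T0).
Proof.
have -> : fpsd_slice T0 =
      (\bigcap_(p in [set: S * S])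
         (fun v => vec v p.1 p.2 - vec v p.2 p.1) @^-1` [set x | x = 0])
    `&` (\bigcap_(x in [set: S -> R])
         (fun v => fdot (fun s t => x s * x t) (vec v)) @^-1` [set y | 0 <= y])
    `&` (fun v => fdot (@fid R S) (vec v)) @^-1` [set y | y <= T0].
  apply/seteqP; split => v /=.
    case=> [[sP qP] trP]; split; [split|by rewrite fdotC fdot_fid].
      by move=> [s t] _ /=; rewrite sP subrr.
    by move=> x _ /=; rewrite -quadfE; exact: qP.
  case=> [[sP qP] trP]; split; last by rewrite -fdot_fid fdotC.
  split; first by move=> s t; apply/eqP; rewrite -subr_eq0; apply/eqP; exact: (sP (s, t)).
  by move=> x; rewrite -/(quadf _ x) quadfE; exact: (qP x).
apply: closedI; first apply: closedI.
- apply: closed_bigI => p _; apply: (closed_preimage (@closed_eq _ 0)).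
  by move=> v; apply: continuousB; exact: coord_continuous.
- apply: closed_bigI => x _.
  apply: (closed_preimage (@closed_ge _ 0)); exact: continuous_fdot_vec.
- apply: (closed_preimage (@closed_le _ T0)); exact: continuous_fdot_vec.
Qed.

(* Bounded because |P s t| <= tr P on the cone. *)
Lemma compact_fpsd_slice T0 : compact (fpsd_slice T0).
Proof.
apply: (subclosed_compact (@closed_fpsd_slice T0)).
  exact: (@rV_compact R n (fun=> `[- T0, T0]) (fun _ => @segment_compact R (- T0) T0)).
move=> v [pv trv] i /=.
have := fpsd_entry_le_ftrace (enum_val i).1 (enum_val i).2 pv.
rewrite /vec -surjective_pairing enum_valK => hle.
have : `|v ord0 i| <= T0 by exact: le_trans hle trv.
by rewrite ler_norml in_itv.
Qed.

Lemma fpsd_slice_min (f : fmat R S -> R) (T0 : R) : 0 <= T0 ->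
  continuous (fun v => f (vec v)) ->
  exists P, [/\ fpsd P, ftrace P <= T0 &
    forall P', fpsd P' -> ftrace P' <= T0 -> f P <= f P'].
Proof.
move=> T0_ge0 cf.
have slice0 : fpsd_slice T0 !=set0.
  exists (unvec (fun _ _ => 0)); rewrite /fpsd_slice /= unvecK /ftrace big1 //; split => //.
  split => // x; rewrite -/(quadf _ x) quadfE /fdot.
  by rewrite big1 // => s _; rewrite big1 // => t _; rewrite mulr0.
have [c cA minc] := EVT_min_rV slice0 (@compact_fpsd_slice T0) (continuous_subspaceT cf).
move: cA; rewrite inE => -[pc trc].
exists (vec c); split => // P' pP' trP'.
by have := minc (unvec P'); rewrite unvecK; apply; rewrite inE /fpsd_slice /= unvecK.
Qed.

End CompactSlice.

Lemma first_order_ge0 (R : realFieldType) (a c : R) : 0 <= c ->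
  (forall e, 0 < e -> e <= 1 -> 0 <= e * a + e ^+ 2 * c) -> 0 <= a.
Proof.
move=> c0 H; rewrite leNgt; apply/negP => a0.
pose e := - a / (c - a).
have ca : 0 < c - a by lra.
have e0 : 0 < e by rewrite divr_gt0 // oppr_gt0.
have e1 : e <= 1 by rewrite ler_pdivrMr // mul1r; lra.
have := H e e0 e1.
have -> : e * a + e ^+ 2 * c = - (e * (a * a / (c - a))).
  by rewrite /e; field; exact: lt0r_neq0.
rewrite oppr_ge0 pmulr_rle0 // => h.
have : 0 < a * a / (c - a) by rewrite divr_gt0 //; nra.
lra.
Qed.

Section Farkas.
Import topology normedtype numFieldNormedType.Exports.
Variable R : realType.
Variable S : finType.
Variable I : finType.
Variable w : I -> fmat R S.
Variable b : I -> R.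
Variable i0 : I.
Hypothesis w_i0 : w i0 = @fid R S.
Implicit Types P : fmat R S.

Definition residual P := \sum_i (fdot (w i) P - b i) ^+ 2.

(* Large enough for a least-residual point of the slice {P >= 0, tr P <= T0} to
   have trace < T0, since tr P0 <= 2 sqrt (residual 0). *)
Let T0 := 2 + \sum_i b i ^+ 2.

Section Minimizer.
Variable P0 : fmat R S.
Hypothesis P0_psd : fpsd P0.
Hypothesis P0_tr : ftrace P0 <= T0.
Hypothesis P0_min : forall P, fpsd P -> ftrace P <= T0 -> residual P0 <= residual P.
Let h i := fdot (w i) P0 - b i.

Lemma residual_variational P : fpsd P -> ftrace P <= T0 ->
  0 <= \sum_i h i * (fdot (w i) P - fdot (w i) P0).
Proof.
move=> pP trP; pose d i := fdot (w i) P - fdot (w i) P0.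
suff : 0 <= 2 * \sum_i h i * d i by move=> hh; lra.
apply: (@first_order_ge0 _ _ (\sum_i d i ^+ 2)).
  by apply: sumr_ge0 => i _; exact: sqr_ge0.
move=> e e0 e1; pose Pe s t := (1 - e) * P0 s t + e * P s t.
have pPe : fpsd Pe by apply: fpsd_comb => //; lra.
have trPe : ftrace Pe <= T0.
  rewrite ftraceE fdotDr !fdotZr -!ftraceE.
  have : (1 - e) * ftrace P0 <= (1 - e) * T0 by apply: ler_wpM2l => //; lra.
  have : e * ftrace P <= e * T0 by apply: ler_wpM2l => //; lra.
  lra.
have := P0_min pPe trPe.
have -> : residual Pe = residual P0 + e * (2 * \sum_i h i * d i) + e ^+ 2 * \sum_i d i ^+ 2.
  rewrite /residual !mulr_sumr -!big_split /=; apply: eq_bigr => i _.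
  rewrite /Pe fdotDr !fdotZr /d /h; ring.
lra.
Qed.

Lemma ftrace_minimizer_lt : ftrace P0 < T0.
Proof.
set beta := \sum_i b i ^+ 2.
have beta_ge0 : 0 <= beta by apply: sumr_ge0 => i _; exact: sqr_ge0.
have res0 : residual (fun s t => 0 * P0 s t) = beta.
  by apply: eq_bigr => i _; rewrite fdotZr mul0r sub0r sqrrN.
have res_le : \sum_i h i ^+ 2 <= beta.
  rewrite -res0; apply: P0_min (fpsd_scale (lexx 0) P0_psd) _.
  by rewrite ftraceE fdotZr mul0r /T0 -/beta; lra.
have tr_sq : ftrace P0 ^+ 2 <= 2 * \sum_i h i ^+ 2 + 2 * beta.
  apply: le_trans (_ : \sum_i fdot (w i) P0 ^+ 2 <= _).
    by rewrite (bigD1 i0) //= w_i0 fdotC fdot_fid lerDl; apply: sumr_ge0 => i _; exact: sqr_ge0.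
  rewrite /beta !mulr_sumr -big_split; apply: ler_sum => i _; rewrite /h -subr_ge0.
  have -> : 2 * (fdot (w i) P0 - b i) ^+ 2 + 2 * b i ^+ 2 - fdot (w i) P0 ^+ 2
          = (fdot (w i) P0 - 2 * b i) ^+ 2 by ring.
  exact: sqr_ge0.
rewrite ltNge; apply/negP => hT.
have T0_ge0 : 0 <= T0 by rewrite /T0 -/beta; lra.
have : T0 ^+ 2 <= ftrace P0 ^+ 2.
  by rewrite ler_sqr ?nnegrE //; apply: le_trans hT.
have := sqr_ge0 beta; rewrite /T0 -/beta; nra.
Qed.

Lemma residual_orth : \sum_i h i * fdot (w i) P0 = 0.
Proof.
have tr_ge0 := ftrace_fpsd_ge0 P0_psd.
have tr_lt := ftrace_minimizer_lt.
apply/eqP; rewrite eq_le; apply/andP; split.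
  have := residual_variational (fpsd_scale (lexx 0) P0_psd) _.
  under eq_bigr => i _ do rewrite fdotZr mul0r sub0r mulrN.
  by rewrite sumrN oppr_ge0; apply; rewrite ftraceE fdotZr mul0r; lra.
pose dl := (T0 - ftrace P0) / (T0 + 1).
have dl_gt0 : 0 < dl by rewrite divr_gt0 //; lra.
have frac_le1 : ftrace P0 / (T0 + 1) <= 1 by rewrite ler_pdivrMr; lra.
have tr_scaled : (1 + dl) * ftrace P0 <= T0.
  have -> : (1 + dl) * ftrace P0 = ftrace P0 + (T0 - ftrace P0) * (ftrace P0 / (T0 + 1)).
    by rewrite /dl; field; lra.
  have : (T0 - ftrace P0) * (ftrace P0 / (T0 + 1)) <= T0 - ftrace P0 by rewrite ler_piMr //; lra.
  lra.
have dl1 : 0 <= 1 + dl by lra.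
have := residual_variational (fpsd_scale dl1 P0_psd) _.
under eq_bigr => i _ do rewrite fdotZr.
have -> : \sum_i h i * ((1 + dl) * fdot (w i) P0 - fdot (w i) P0) = dl * \sum_i h i * fdot (w i) P0.
  by rewrite mulr_sumr; apply: eq_bigr => i _; ring.
by rewrite pmulr_rge0 //; apply; rewrite ftraceE fdotZr -ftraceE.
Qed.

Lemma residual_cone P : fpsd P -> 0 <= \sum_i h i * fdot (w i) P.
Proof.
move=> pP; have tr_ge0 := ftrace_fpsd_ge0 pP.
pose sg := T0 / (1 + ftrace P).
have T0_gt0 : 0 < T0 := le_lt_trans (ftrace_fpsd_ge0 P0_psd) ftrace_minimizer_lt.
have sg_gt0 : 0 < sg by rewrite divr_gt0 //; lra.
have := residual_variational (fpsd_scale (ltW sg_gt0) pP) _.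
under eq_bigr => i _ do rewrite fdotZr.
have -> : \sum_i h i * (sg * fdot (w i) P - fdot (w i) P0)
        = sg * \sum_i h i * fdot (w i) P - \sum_i h i * fdot (w i) P0.
  by rewrite mulr_sumr -sumrB; apply: eq_bigr => i _; ring.
rewrite residual_orth subr0 pmulr_rge0 //; apply.
rewrite ftraceE fdotZr -ftraceE /sg mulrAC ler_pdivrMr; last lra.
by rewrite ler_pM2l //; lra.
Qed.

End Minimizer.

Lemma continuous_residual : continuous (fun v => residual (vec v)).
Proof.
apply: continuous_big => [|i _]; first exact: add_continuous.
have -> : (fun v => (fdot (w i) (vec v) - b i) ^+ 2) =
          (fun v => (fdot (w i) (vec v) - b i) * (fdot (w i) (vec v) - b i)).
  by apply/funext => v; rewrite expr2.
have cA : continuous (fun v => fdot (w i) (vec v) - b i).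
  by move=> v; apply: continuousB; [exact: continuous_fdot_vec | exact: cst_continuous].
by move=> v; exact: continuousM (cA v) (cA v).
Qed.

(* Minimise the residual over a compact slice of the cone: at the minimiser the
   residual vector [h] is nonnegative on the cone, and [h . b = - |h|^2]. *)
Lemma fpsd_farkas :
  (forall h : I -> R, (forall P, fpsd P -> 0 <= \sum_i h i * fdot (w i) P) ->
     0 <= \sum_i h i * b i) ->
  exists P, fpsd P /\ forall i, fdot (w i) P = b i.
Proof.
move=> Hdual.
have T0_ge0 : 0 <= T0 by apply: addr_ge0 => //; apply: sumr_ge0 => i _; exact: sqr_ge0.
have [P0 [P0_psd P0_tr P0_min]] := fpsd_slice_min T0_ge0 continuous_residual.
pose h i := fdot (w i) P0 - b i.
have := Hdual h (residual_cone P0_psd P0_tr P0_min).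
have -> : \sum_i h i * b i = \sum_i h i * fdot (w i) P0 - \sum_i h i ^+ 2.
  by rewrite -sumrB; apply: eq_bigr => i _; rewrite /h; ring.
rewrite (residual_orth P0_psd P0_tr P0_min) sub0r oppr_ge0 => sum_le0.
have sum_eq0 : \sum_i h i ^+ 2 = 0.
  by apply/le_anti; rewrite sum_le0 sumr_ge0 // => i _; exact: sqr_ge0.
exists P0; split => // i; apply/eqP; rewrite -subr_eq0 -sqrf_eq0; apply/eqP.
by apply: (psumr_eq0P (P := predT) (F := fun i => h i ^+ 2)) => // j _; exact: sqr_ge0.
Qed.

End Farkas.

Section Dilations.
Variable R : realType.
Variables N M D : nat.
Local Notation S := (midx N M).
Variable Gam : finType.
Variable nonneg : pred Gam.
Variable g0 : Gam.
Variable G : Gam -> 'M[R]_M.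
Hypothesis HG : Gbasis nonneg g0 G.
Variable T : 'I_D -> S -> R.
Local Notation A := (TdagT T).
Local Notation Id := (@fid R S).

Definition norm_preserving_dilation := exists (D' : nat) (Tt : 'I_D' -> S -> R),
  (D <= D')%N /\ norm_preserving Tt /\
  forall (a : 'I_N -> 'I_M -> R) (i : 'I_D) (j : 'I_D'),
    val i = val j -> mlapply Tt a j = mlapply T a i.

Definition nonsym_loewner_bound := exists c : {ffun 'I_N -> Gam} -> R,
  (forall g, all_nonneg nonneg g -> c g = 0) /\
  fsymm (Gexpand G c) /\
  floe (fun s t => A s t + Gexpand G c s t) Id.

Definition sym_density_bound := forall c : {ffun 'I_N -> Gam} -> R,
  (forall g, ~~ all_nonneg nonneg g -> c g = 0) ->
  density (Gexpand G c) -> ftrace (fmul (Gexpand G c) A) <= 1.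

Lemma TdagT_sym D' (T' : 'I_D' -> S -> R) : fsymm (TdagT T').
Proof. by move=> s t; apply: eq_bigr => i _; rewrite mulrC. Qed.

Lemma fdot_TdagT D' (X : fmat R S) (T' : 'I_D' -> S -> R) :
  fdot X (TdagT T') = \sum_i quadf X (T' i).
Proof.
rewrite fdotC (@fdot_decomp _ _ _ (fun _ => 1) T') => [|s t].
  by apply: eq_bigr => i _; rewrite mul1r.
by apply: eq_bigr => i _; rewrite mul1r.
Qed.

Lemma dilation_density_bound : norm_preserving_dilation -> sym_density_bound.
Proof.
move=> [D' [Tt [HD [Hnp Hext]]]] c Hc [rho_psd rho_tr].
rewrite ftrace_fmul; last exact: TdagT_sym.
have rows i : Tt (widen_ord HD i) = T i.
  by apply/funext => s; rewrite -!mlapply_delta; apply: Hext.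
have dot_np : fdot (Gexpand G c) (TdagT Tt) = 1.
  have HY a : quadf (fun s t => TdagT Tt s t - Id s t) (tensorv a) = 0.
    by rewrite quadfE fdotBr -!quadfE (proj1 (norm_preservingP Tt) Hnp a) subrr.
  have : fdot (Gexpand G c) (fun s t => TdagT Tt s t - Id s t) = 0.
    rewrite fdot_suml; apply: big1 => g _.
    have [gn|/Hc -> ] := boolP (all_nonneg nonneg g); last by rewrite mul0r.
    rewrite fdot_Gtensor_eq0 ?mulr0 // => k.
    by apply: (Gbasis_sym HG); move/forallP: gn.
  by rewrite fdotBr fdot_fid rho_tr => /eqP; rewrite subr_eq0 => /eqP.
rewrite -dot_np !fdot_TdagT.
rewrite [X in _ <= X](bigID (fun j : 'I_D' => (j < D)%N)) /= (big_ord_narrow HD).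
under [X in _ <= X + _]eq_bigr => i _ do rewrite rows.
by rewrite lerDl; apply: sumr_ge0 => j _; exact: rho_psd.2.
Qed.

Lemma split_lshift m n (i : 'I_m) : split (lshift n i) = inl i.
Proof. exact: (unsplitK (inl i : 'I_m + 'I_n)). Qed.

Lemma split_rshift m n (i : 'I_n) : split (rshift m i) = inr i.
Proof. exact: (unsplitK (inr i : 'I_m + 'I_n)). Qed.

Lemma loewner_bound_dilation : nonsym_loewner_bound -> norm_preserving_dilation.
Proof.
move=> [c [Hc [_ Hle]]].
have [l Hl] := fpsd_sum_outer Hle.
pose Tt (i : 'I_(D + size l)) :=
  match split i with inl i' => T i' | inr j => nth (fun _ => 0) l j end.
have Tt_top a i : mlapply Tt a (lshift (size l) i) = mlapply T a i.
  by rewrite /mlapply /Tt split_lshift.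
exists (D + size l), Tt; split; first exact: leq_addr.
split=> [|a i j Hij]; last by rewrite (_ : j = lshift (size l) i) ?Tt_top //; exact: val_inj.
apply/norm_preservingP => a.
rewrite -sumsq_mlapply big_split_ord /=.
under eq_bigr => i _ do rewrite Tt_top.
have -> : \sum_(i < size l) mlapply Tt a (rshift D i) ^+ 2 =
          quadf (fun s t => \sum_(v <- l) v s * v t) (tensorv a).
  rewrite quadf_sum_outer (big_nth (fun _ => 0)) big_mkord; apply: eq_bigr => j _.
  by rewrite /mlapply /Tt split_rshift.
have -> : quadf (fun s t => \sum_(v <- l) v s * v t) (tensorv a) =
    quadf (fun s t => Id s t - (A s t + Gexpand G c s t)) (tensorv a).
  by apply: eq_bigr => s _; apply: eq_bigr => t _; rewrite -Hl.
rewrite sumsq_mlapply !quadfE fdotBr fdotDr -!quadfE.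
by rewrite (quadf_Gexpand_tensorv HG) //; ring.
Qed.

Let wsym g : fmat R S := if all_nonneg nonneg g then Gtensor G g else fun _ _ => 0.

Lemma fdot_Gexpand_wsym (h : {ffun 'I_N -> Gam} -> R) X :
  fdot (Gexpand G (fun g => if all_nonneg nonneg g then h g else 0)) X =
  \sum_g h g * fdot (wsym g) X.
Proof.
rewrite fdot_suml; apply: eq_bigr => g _; rewrite /wsym.
by case: ifP => // _; rewrite mul0r /fdot big1 ?mulr0 // => s _; rewrite big1 // => t _; rewrite mul0r.
Qed.

(* Dual feasibility: an [h] nonnegative on the cone expands to a positive
   multiple of a symmetric density matrix, or to zero. *)
Lemma sym_density_dual : sym_density_bound ->
  forall h, (forall P, fpsd P -> 0 <= \sum_g h g * fdot (wsym g) P) ->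
  0 <= \sum_g h g * fdot (wsym g) (fun s t => Id s t - A s t).
Proof.
move=> Hdens h Hh.
pose c g := if all_nonneg nonneg g then h g else 0.
have c_sym g : ~~ all_nonneg nonneg g -> c g = 0 by rewrite /c => /negbTE ->.
pose r := Gexpand G c.
rewrite -fdot_Gexpand_wsym -/c -/r.
have r_psd : fpsd r.
  split; first exact: (Gexpand_sym HG c_sym).
  by move=> x; rewrite -/(quadf _ x) quadfE fdotC fdot_Gexpand_wsym; apply: Hh; exact: fpsd_outer.
have tr_ge0 := ftrace_fpsd_ge0 r_psd.
have [tr0|tr_neq0] := eqVneq (ftrace r) 0.
  by rewrite fdotC /fdot big1 // => s _; rewrite big1 // => t _; rewrite (fpsd_ftrace_eq0 r_psd tr0) mulr0.
have tr_gt0 : 0 < ftrace r by rewrite lt_def tr_neq0.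
pose rho s t := (ftrace r)^-1 * r s t.
pose c' g := c g / ftrace r.
have c'_sym g : ~~ all_nonneg nonneg g -> c' g = 0 by move=> /c_sym; rewrite /c' => ->; rewrite mul0r.
have rho_expand : Gexpand G c' = rho.
  apply/funext => s; apply/funext => t; rewrite /rho /r /Gexpand mulr_sumr.
  by apply: eq_bigr => g _; rewrite /c'; ring.
have rho_density : density (Gexpand G c').
  rewrite rho_expand; split; first by apply: fpsd_scale r_psd; rewrite invr_ge0.
  by rewrite /ftrace -mulr_sumr mulVf.
have := Hdens c' c'_sym rho_density.
rewrite rho_expand ftrace_fmul; last exact: TdagT_sym.
rewrite fdotC fdotZr fdotC fdotBr fdot_fid subr_ge0.
by rewrite ler_pdivrMl // mulr1.
Qed.

Lemma density_bound_loewner : sym_density_bound -> nonsym_loewner_bound.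
Proof.
move=> Hdens.
have wsym_g0 : wsym [ffun => g0] = Id.
  have g0_sym : all_nonneg nonneg ([ffun => g0] : {ffun 'I_N -> Gam}).
    by apply/forallP => k; rewrite ffunE (Gbasis_nonneg0 HG).
  by rewrite /wsym g0_sym (Gtensor_g0 N HG).
have [P [P_psd HP]] := fpsd_farkas wsym_g0 (sym_density_dual Hdens).
pose Q s t := Id s t - A s t - P s t.
have Q_nonsym g : all_nonneg nonneg g -> fdot (Gtensor G g) Q = 0.
  by move=> gn; have := HP g; rewrite /wsym gn /= => HPg; rewrite /Q fdotBr HPg subrr.
exists (fun g => if all_nonneg nonneg g then 0 else fdot (Gtensor G g) Q / Gtnorm G g).
rewrite -(Gexpand_nonsym HG Q_nonsym); split; first by move=> g ->.
split=> [s t|]; first by rewrite /Q (TdagT_sym T s t) P_psd.1 /fid eq_sym.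
rewrite /floe (_ : (fun s t => Id s t - (A s t + Q s t)) = P) //.
by apply/funext => s; apply/funext => t; rewrite /Q; ring.
Qed.

End Dilations.

Theorem proposition7 (R : realType) (N M D : nat)
  (Gam : finType) (nonneg : pred Gam) (g0 : Gam) (G : Gam -> 'M[R]_M)
  (HG : Gbasis nonneg g0 G)
  (T : 'I_D -> midx N M -> R) (HT : is_contraction T) :
  [<-> (* 1. norm-preserving dilation *)
       (exists (D' : nat) (Tt : 'I_D' -> midx N M -> R),
          (D <= D')%N /\ norm_preserving Tt /\
          forall (a : 'I_N -> 'I_M -> R) (i : 'I_D) (j : 'I_D'),
            val i = val j -> mlapply Tt a j = mlapply T a i);
       (* 2. Q = sum_g c_g ⊗ G_{g_k}, c_g = 0 if all g_k >= 0, 1 >= T^T T + Q *)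
       (exists c : {ffun 'I_N -> Gam} -> R,
          (forall g : {ffun 'I_N -> Gam}, [forall k, nonneg (g k)] -> c g = 0) /\
          fsymm (Gexpand G c) /\
          floe (fun s t => TdagT T s t + Gexpand G c s t) (@fid R _));
       (* 3. tr[rho T^T T] <= 1 for all density matrices rho = sum_{g>=0} c_g ⊗ G_{g_k} *)
       (forall c : {ffun 'I_N -> Gam} -> R,
          (forall g : {ffun 'I_N -> Gam}, ~~ [forall k, nonneg (g k)] -> c g = 0) ->
          density (Gexpand G c) ->
          ftrace (fmul (Gexpand G c) (TdagT T)) <= 1)].
Proof.
constructor; [|constructor].
- by move=> /(dilation_density_bound HG) /(density_bound_loewner HG).
- by move=> /(loewner_bound_dilation HG) /(dilation_density_bound HG).
- by move=> /(density_bound_loewner HG) /(loewner_bound_dilation HG).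
Qed.
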